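(* Let $G$ be a graph and $m \geq 1$ an integer. If there exists an optimal packing coloring of $FSSD_m(G)$ which assigns color $1$ to all subdivided vertices, then $\chi_\rho(FSSD_m(G)) = \chi_\rho(FSSD_{m+1}(G))$.
   Context: All graphs are finite and simple. For a positive integer $i$, an $i$-packing in a graph is a set of vertices any two distinct members of which are at distance greater than $i$. A $k$-packing coloring of a graph $H$ is a map $c:V(H)\to\{1,\dots,k\}$ such that $c(u)=c(v)=i$ with $u \neq v$ implies $d_H(u,v)>i$; the packing chromatic number $\chi_\rho(H)$ is the least such $k$, and a $\chi_\rho(H)$-packing coloring is called optimal. For a positive integer $m$, $FSSD_m(G)$ is obtained from $G$ by replacing each edge $uv$ of $G$ by a copy of $K_{2,m}$: the edge $uv$ is deleted and $m$ new vertices are added, each adjacent to exactly $u$ and $v$. These new vertices are called the subdivided vertices of $FSSD_m(G)$. *)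

From mathcomp Require Import all_boot.
Set Implicit Arguments.
Unset Strict Implicit.
Unset Printing Implicit Defensive.

(* A graph H is given by a finite vertex type V and an adjacency relation
   e : rel V.  [within e k x y] holds iff there is a walk of length at most
   k from x to y, i.e. d_H(x,y) <= k.  Hence d_H(x,y) > k iff
   ~~ within e k x y (vertices in different components are at infinite
   distance). *)
Fixpoint within (V : finType) (e : rel V) (k : nat) (x y : V) : bool :=
  match k with
  | 0 => x == y
  | k'.+1 => (x == y) || [exists z, e x z && within e k' z y]
  end.

Definition packing_coloring (V : finType) (e : rel V) (k : nat) (c : V -> nat)
  : bool :=
  [forall v, (1 <= c v <= k)] &&
  [forall u, forall v, ((u != v) && (c u == c v)) ==> ~~ within e (c u) u v].

(* H admits a k-packing coloring (colorings into {0..k} suffice, as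
   colors must lie in {1..k}). *)
Definition has_packing_coloring (V : finType) (e : rel V) (k : nat) : bool :=
  [exists c : {ffun V -> 'I_k.+1},
     packing_coloring e k (fun v => nat_of_ord (c v))].

Lemma has_packing_coloring_ex (V : finType) (e : rel V) :
  exists k, has_packing_coloring e k.
Proof.
exists #|V|; apply/existsP.
exists [ffun v : V => inord (enum_rank v).+1 : 'I_#|V|.+1].
have Hc (v : V) : nat_of_ord ([ffun v : V => inord (enum_rank v).+1 : 'I_#|V|.+1] v)
            = (enum_rank v).+1.
  by rewrite ffunE inordK // ltnS; exact: ltn_ord.
apply/andP; split.
  by apply/forallP => v; rewrite Hc /=; exact: ltn_ord.
apply/forallP => u; apply/forallP => v; apply/implyP => /andP [Huv].
rewrite !Hc eqSS => /eqP /val_inj /enum_rank_inj Heq.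
by rewrite Heq eqxx in Huv.
Qed.

Definition packing_chromatic (V : finType) (e : rel V) : nat :=
  ex_minn (has_packing_coloring_ex e).

(* Vertices: the vertices of G
   (inl w) and, for each edge {u,v} of G (represented once, with
   enum_rank u < enum_rank v) and each i < m, a subdivided vertex
   inr (u, v, i). *)
Definition fssd_valid (T : finType) (e : rel T) (m : nat)
  (x : T + (T * T * 'I_m)) : bool :=
  match x with
  | inl _ => true
  | inr (u, v, _) => e u v && (enum_rank u < enum_rank v)
  end.

Definition fssd_vert (T : finType) (e : rel T) (m : nat) : finType :=
  {x : T + (T * T * 'I_m) | fssd_valid e x}.

Definition fssd_adj0 (T : finType) (m : nat) (x y : T + (T * T * 'I_m))
  : bool :=
  match x, y with
  | inl w, inr (u, v, _) => (w == u) || (w == v)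
  | inr (u, v, _), inl w => (w == u) || (w == v)
  | _, _ => false
  end.

Definition fssd_adj (T : finType) (e : rel T) (m : nat) : rel (fssd_vert e m) :=
  fun x y => fssd_adj0 (val x) (val y).

Definition subdivided (T : finType) (e : rel T) (m : nat) (x : fssd_vert e m)
  : bool :=
  if val x is inr _ then true else false.

(* Any relabelling h : 'I_n -> 'I_m of the parallel subdivided vertices is a
   graph homomorphism FSSD_n(G) -> FSSD_m(G), and a packing colouring pulled
   back along a homomorphism stays valid except possibly on the vertices it
   merges.  An injective relabelling merges nothing, so chi(FSSD_m(G)) is
   monotone in m.  Collapsing all m+1 copies onto one merges only subdivided
   vertices of a common edge; they are nonadjacent, hence at distance > 1,
   and the given optimal colouring gives them colour 1, so its pullback is a
   packing colouring of FSSD_(m+1)(G). *)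
From mathcomp Require Import all_boot.

Set Implicit Arguments.
Unset Strict Implicit.
Unset Printing Implicit Defensive.

Section PackingChromatic.

Variables (V : finType) (e : rel V).

Lemma within1E (x y : V) : within e 1 x y = (x == y) || e x y.
Proof.
congr (_ || _); apply/existsP/idP => [[z /andP[xz /eqP <-]] //|xy].
by exists y; rewrite xy eqxx.
Qed.

Lemma has_packing_coloringP k :
  reflect (exists c, packing_coloring e k c) (has_packing_coloring e k).
Proof.
apply: (iffP existsP) => [[c c_col]|[c /andP[/forallP c_rng /forallP c_far]]].
  by exists (fun v => nat_of_ord (c v)).
exists [ffun v => inord (c v) : 'I_k.+1].
have cE v : nat_of_ord ([ffun v => inord (c v) : 'I_k.+1] v) = c v.
  by rewrite ffunE inordK // ltnS; case/andP: (c_rng v).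
apply/andP; split; first by apply/forallP => v; rewrite cE.
apply/forallP => u; apply/forallP => v; rewrite !cE.
exact: (forallP (c_far u)).
Qed.

Lemma packing_chromatic_min k :
  has_packing_coloring e k -> packing_chromatic e <= k.
Proof. by rewrite /packing_chromatic; case: ex_minnP => k0 _; apply. Qed.

Lemma packing_chromaticP : has_packing_coloring e (packing_chromatic e).
Proof. by rewrite /packing_chromatic; case: ex_minnP. Qed.

End PackingChromatic.

Section PackingColoringComp.

Variables (V W : finType) (e : rel V) (e' : rel W).

Lemma within_homo (f : V -> W) k (x y : V) :
  {homo f : u v / e u v >-> e' u v} ->
  within e k x y -> within e' k (f x) (f y).
Proof.
move=> homo_f; elim: k x => [|k IHk] x /=; first by move/eqP->.
case/orP=> [/eqP->|/existsP[z /andP[xz zy]]]; first by rewrite eqxx.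
by apply/orP; right; apply/existsP; exists (f z); rewrite homo_f ?IHk.
Qed.

Lemma packing_coloring_comp (f : V -> W) k c :
  {homo f : u v / e u v >-> e' u v} ->
  packing_coloring e' k c ->
  (forall x y, x != y -> f x = f y -> ~~ within e (c (f x)) x y) ->
  packing_coloring e k (c \o f).
Proof.
move=> homo_f /andP[/forallP c_range /forallP c_far] fiber_far.
apply/andP; split; first by apply/forallP => v; apply: c_range.
apply/forallP => u; apply/forallP => v; apply/implyP => /andP[uv /eqP /= cuv].
have [fuv|fuv] := eqVneq (f u) (f v); first exact: fiber_far.
have := implyP (forallP (c_far (f u)) (f v)).
rewrite fuv cuv eqxx => /(_ isT); apply: contra; exact: within_homo.
Qed.

Lemma packing_chromatic_comp_le (f : V -> W) k c :
  {homo f : u v / e u v >-> e' u v} ->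
  packing_coloring e' k c ->
  (forall x y, x != y -> f x = f y -> ~~ within e (c (f x)) x y) ->
  packing_chromatic e <= k.
Proof.
move=> homo_f c_col fiber_far.
apply/packing_chromatic_min/has_packing_coloringP.
by exists (c \o f); apply: packing_coloring_comp fiber_far.
Qed.

Lemma packing_chromatic_inj_homo_le (f : V -> W) :
  injective f -> {homo f : u v / e u v >-> e' u v} ->
  packing_chromatic e <= packing_chromatic e'.
Proof.
move=> inj_f homo_f.
have /has_packing_coloringP[c c_col] := packing_chromaticP e'.
apply: packing_chromatic_comp_le homo_f c_col _ => x y /eqP xy /inj_f.
by move/xy.
Qed.

End PackingColoringComp.

Section Relabel.

Variables (T : finType) (e : rel T).

Definition relabel_sum m n (h : 'I_m -> 'I_n) (x : T + (T * T * 'I_m))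
  : T + (T * T * 'I_n) :=
  match x with
  | inl w => inl w
  | inr (u, v, i) => inr (u, v, h i)
  end.

Lemma fssd_valid_relabel m n (h : 'I_m -> 'I_n) x :
  fssd_valid e (relabel_sum h x) = fssd_valid e x.
Proof. by case: x => [|[[]]]. Qed.

Definition fssd_relabel m n (h : 'I_m -> 'I_n) (x : fssd_vert e m)
  : fssd_vert e n :=
  exist _ (relabel_sum h (val x))
    (etrans (fssd_valid_relabel h (val x)) (valP x)).

Lemma fssd_relabel_homo m n (h : 'I_m -> 'I_n) :
  {homo fssd_relabel h : x y / fssd_adj x y >-> fssd_adj x y}.
Proof. by move=> [[?|[[? ?] ?]] ?] [[?|[[? ?] ?]] ?]. Qed.

Lemma relabel_sum_inj m n (h : 'I_m -> 'I_n) :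
  injective h -> injective (relabel_sum h).
Proof.
by move=> inj_h [?|[[? ?] ?]] [?|[[? ?] ?]] //= [] => [->|-> -> /inj_h ->].
Qed.

Lemma fssd_relabel_inj m n (h : 'I_m -> 'I_n) :
  injective h -> injective (fssd_relabel h).
Proof. by move=> inj_h x y /(congr1 val) /(relabel_sum_inj inj_h) /val_inj. Qed.

Lemma fssd_relabel_fiber m n (h : 'I_m -> 'I_n) (x y : fssd_vert e m) :
  x != y -> fssd_relabel h x = fssd_relabel h y ->
  subdivided x && subdivided y.
Proof.
move=> /eqP xy /(congr1 val); rewrite /subdivided.
case: x y xy => [[a|[[? ?] ?]] ?] [[b|[[? ?] ?]] ?] //= xy [ab].
by case: xy; apply: val_inj; rewrite /= ab.
Qed.

Lemma subdivided_relabel m n (h : 'I_m -> 'I_n) (x : fssd_vert e m) :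
  subdivided (fssd_relabel h x) = subdivided x.
Proof. by case: x => [[?|[[? ?] ?]] ?]. Qed.

Lemma subdivided_nonadj m (x y : fssd_vert e m) :
  subdivided x -> subdivided y -> ~~ fssd_adj x y.
Proof. by case: x y => [[?|[[? ?] ?]] ?] [[?|[[? ?] ?]] ?]. Qed.

Lemma packing_chromatic_fssd_mono m n :
  m <= n ->
  packing_chromatic (@fssd_adj T e m) <= packing_chromatic (@fssd_adj T e n).
Proof.
move=> le_mn.
apply: (packing_chromatic_inj_homo_le (f := fssd_relabel (widen_ord le_mn))).
  by apply: fssd_relabel_inj => i j [/val_inj].
exact: fssd_relabel_homo.
Qed.

Lemma packing_chromatic_fssd_le_of_subdivided1 m n (h : 'I_n -> 'I_m) k
    (c : fssd_vert e m -> nat) :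
  packing_coloring (@fssd_adj T e m) k c ->
  (forall x, subdivided x -> c x = 1) ->
  packing_chromatic (@fssd_adj T e n) <= k.
Proof.
move=> c_col c_sub.
apply: packing_chromatic_comp_le (@fssd_relabel_homo n m h) c_col _.
move=> x y xy /(fssd_relabel_fiber xy) /andP[sx sy].
by rewrite c_sub ?subdivided_relabel // within1E negb_or xy subdivided_nonadj.
Qed.

End Relabel.

Theorem proposition4 (T : finType) (e : rel T)
  (e_sym : symmetric e) (e_irr : irreflexive e) (m : nat) (hm : 1 <= m) :
  (exists c : fssd_vert e m -> nat,
      packing_coloring (@fssd_adj T e m)
        (packing_chromatic (@fssd_adj T e m)) c
      /\ (forall x : fssd_vert e m, subdivided x -> c x = 1)) ->
  packing_chromatic (@fssd_adj T e m) = packing_chromatic (@fssd_adj T e m.+1).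
Proof.
case=> c [c_col c_sub]; apply/eqP.
rewrite eqn_leq packing_chromatic_fssd_mono //=.
exact: (packing_chromatic_fssd_le_of_subdivided1 (fun _ => Ordinal hm)
          c_col c_sub).
Qed.
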